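(* Let $q$ be a prime power, $t\ge1$, $F=\mathbb{F}_{q^t}$, $A\subseteq F$ with $|A|=n\le q^t$, and let $k$ satisfy $r=n-k\ge q^s$ for some integer $s<t$. Let $\{u_1,\dots,u_t\}$ be an $\mathbb{F}_q$-basis of $F$, $W$ an arbitrary $\mathbb{F}_q$-subspace of $F$ of dimension $s$, $L_W(x)=\prod_{w\in W}(x-w)$, $\alpha^*\in A$, and $g_i(x)=L_W\big(u_i(x-\alpha^* )\big)/(x-\alpha^* )$ for $i=1,\dots,t$ (polynomials of degree $q^s-1\le r-1$). Then the check polynomials $g_1,\dots,g_t$ yield a linear repair scheme over $\mathbb{F}_q$ for the codeword symbol $f(\alpha^* )$ of the Reed-Solomon code $\mathrm{RS}(A,k)$ with repair bandwidth at most $(n-1)(t-s)\log_2 q$ bits. Moreover, when $n=|F|=q^t$ and $r=q^s$, this repair bandwidth is optimal among linear repair schemes over $\mathbb{F}_q$.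
   Context: $\mathrm{RS}(A,k)=\{(f(\alpha))_{\alpha\in A} : f\in F[x],\ \deg f<k\}$, with $f(\alpha)$ stored at node $\alpha$. Every polynomial $g\in F[x]$ of degree at most $r-1$ gives a dual codeword (a check): $\sum_{\alpha\in A}\lambda_\alpha g(\alpha)f(\alpha)=0$ for fixed nonzero multipliers $\lambda_\alpha$. Given checks $g_1,\dots,g_t$ of degree at most $r-1$ with $\mathrm{rank}_{\mathbb{F}_q}\{g_i(\alpha^* )\}_i=t$, one obtains a linear repair scheme over $\mathbb{F}_q$: applying $\mathrm{Tr}_{F/\mathbb{F}_q}$ to the check equations, the replacement node recovers $t$ independent traces of $f(\alpha^* )$ by downloading from each node $\alpha\ne\alpha^*$ exactly $b_\alpha=\mathrm{rank}_{\mathbb{F}_q}\{g_1(\alpha),\dots,g_t(\alpha)\}$ sub-symbols of $\mathbb{F}_q$; the repair bandwidth is $\sum_{\alpha\neq\alpha^*}b_\alpha$ sub-symbols, i.e. $\log_2 q$ times that many bits. In general a linear repair scheme over $\mathbb{F}_q$ is one where each node sends $\mathbb{F}_q$-linear functions of its symbol and $f(\alpha^* )$ is recovered $\mathbb{F}_q$-linearly; its bandwidth is the total amount downloaded. *)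

From HB Require Import structures.
From mathcomp Require Import all_boot all_order all_algebra all_field.
Set Implicit Arguments. Unset Strict Implicit. Unset Printing Implicit Defensive.
Import GRing.Theory.
Local Open Scope ring_scope.

(* Setting: K = F_q (a finite field), L = F_{q^t} a finite field extension of K.
   L is viewed as a K-vector space; "F_q-subspace" = {vspace L},
   "rank over F_q" = \dim of the K-span. *)

Section Repair.
Variables (K : finFieldType) (L : fieldExtType K).

(* Subspace polynomial L_W(x) = prod_{w in W} (x - w).  The finite type
   finvect_type L (= L) is only used to enumerate the elements of L. *)
Definition subspace_poly (W : {vspace L}) : {poly L} :=
  \prod_(w : finvect_type L | (w : L) \in W) ('X - ((w : L))%:P).

Definition check_poly (W : {vspace L}) (u a : L) : {poly L} :=
  (subspace_poly W \Po (u%:P * ('X - a%:P))) %/ ('X - a%:P).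

(* A linear repair scheme over K for the symbol at node a of RS(A,k):
   S b is the list of downloads from node b: each download is a K-linear
   functional mu : L -> K applied to the symbol f(b), together with the
   coefficient c in L with which it enters the K-linear recovery map
   (a K-linear map K^N -> L is exactly x |-> sum_j x_j c_j). *)
Definition is_linear_repair_scheme (A : seq L) (k : nat) (a : L)
    (S : L -> seq ('Hom(L, K^o) * L)) : Prop :=
  forall f : {poly L}, (size f <= k)%N ->
    f.[a] = \sum_(b <- A | b != a) \sum_(p <- S b) ((p.1 f.[b] : K) *: p.2).

(* Repair bandwidth, in sub-symbols of K (= log2 q bits each). *)
Definition repair_bandwidth (A : seq L) (a : L)
    (S : L -> seq ('Hom(L, K^o) * L)) : nat :=
  (\sum_(b <- A | b != a) size (S b))%N.

End Repair.

From HB Require Import structures.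
From mathcomp Require Import all_boot all_order all_algebra all_field.
From mathcomp Require Import zify.
Import GRing.Theory.
Local Open Scope ring_scope.
Set Implicit Arguments. Unset Strict Implicit. Unset Printing Implicit Defensive.

(* Since [W] is an [F_q]-space of size [N = q ^ s] and [c ^ N = c] on [F_q], the subspace
   polynomial [L_W] is [F_q]-linear with [W] in its kernel.  Writing [L_W = X M] with
   [M(0) != 0], the values [g_i(a) = u_i M(0)] form a basis of [F], while for [b != a] the
   values [g_i(b) = L_W(u_i (b - a)) / (b - a)] span a space of dimension at most [t - s].
   Since [(lambda_b g(b))_b] is a dual codeword whenever [deg g < n - k], applying a nonzero
   [F_q]-linear functional [tau] to the check equations and expanding [f(a)] in the
   [tau]-dual basis of the [g_i(a)] recovers [f(a)] from the values [tau (lambda_b v f(b))],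
   [v] ranging over a basis of the span of the [g_i(b)].

   Conversely, given any linear repair scheme, let [V_b] be the space of [z] such that
   [tau (z c) = 0] for every recovery coefficient [c] of node [b]; it has dimension at least
   [t - b_b].  A nonzero [z] lies in fewer than [r] of the [V_b], for otherwise some codeword
   vanishes on all other nodes while [f(a)] is arbitrary.  Double counting gives
   [sum_b q ^ dim V_b <= (n - 1) q ^ s] when [n = q ^ t] and [r = q ^ s], and convexity of
   [x |-> q ^ x] turns this into [sum_b b_b >= (n - 1) (t - s)]. *)

Lemma size_filter_predC1 (T : eqType) (s : seq T) x :
  uniq s -> x \in s -> size [seq y <- s | y != x] = (size s).-1.
Proof. by move=> us xs; rewrite -rem_filter // size_rem. Qed.

Lemma dim_limg_leq (F : fieldType) (aT rT : vectType F) (f : 'Hom(aT, rT)) (U : {vspace aT}) :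
  (\dim (f @: U) <= \dim U)%N.
Proof. by rewrite -(limg_ker_dim f U) leq_addl. Qed.

Lemma dimv_cap_ge (F : fieldType) (vT : vectType F) (U V : {vspace vT}) :
  (\dim U + \dim V - \dim {:vT} <= \dim (U :&: V))%N.
Proof.
by have := dimv_sum_cap U V; have := dimvS (subvf (U + V)); lia.
Qed.

Lemma dim_lker_functional (F : fieldType) (vT : vectType F) (f : 'Hom(vT, F^o)) :
  (\dim {:vT} - 1 <= \dim (lker f))%N.
Proof.
have dim_limg : (\dim (limg f) <= 1)%N by rewrite (leq_trans (dimvS (subvf _))) ?dimvf.
by have := limg_ker_dim f fullv; rewrite capfv; lia.
Qed.

(* [q ^ y >= q ^ s + (y - s) (q - 1) q ^ s], stated without truncated subtraction. *)
Lemma expn_tangent q s y : (1 < q)%N ->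
  (q ^ s + y * (q ^ s * (q - 1)) <= q ^ y + s * (q ^ s * (q - 1)))%N.
Proof.
move=> q_gt1; have [le_sy|lt_ys] := leqP s y; last first.
  have : (q ^ s <= q ^ s * (q - 1))%N by rewrite leq_pmulr // subn_gt0.
  by move: lt_ys; nia.
rewrite -(subnKC le_sy) expnD; set d := (y - s)%N.
have bernoulli : (1 + d * (q - 1) <= q ^ d)%N.
  by elim: d => [|d IHd]; rewrite ?expn0 // expnS; nia.
by nia.
Qed.

Lemma sum_leq_of_sum_expn_leq (I : Type) (r : seq I) (y : I -> nat) q s : (1 < q)%N ->
  (\sum_(i <- r) q ^ y i <= size r * q ^ s)%N -> (\sum_(i <- r) y i <= size r * s)%N.
Proof.
move=> q_gt1 sum_le; set D := (q ^ s * (q - 1))%N.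
have D_gt0 : (0 < D)%N by rewrite muln_gt0 expn_gt0 !subn_gt0 (ltnW q_gt1) q_gt1.
have := @leq_sum _ r xpredT _ _ (fun i _ => expn_tangent s (y i) q_gt1).
rewrite !big_split /= -!big_distrl /= !big_const_seq !iter_addn_0 count_predT -/D => tangent.
rewrite -(leq_pmul2r D_gt0) -(leq_add2l (q ^ s * size r)); apply: leq_trans tangent _.
by rewrite [(s * _)%N]mulnC leq_add2r mulnC.
Qed.

Section SubspacePoly.
Variables (K : finFieldType) (L : fieldExtType K) (W : {vspace L}).
Local Notation LW := (subspace_poly W).
Local Notation N := (#|K| ^ \dim W)%N.

Definition vspace_enum : seq L := enum [pred w : finvect_type L | (w : L) \in W].

Lemma uniq_vspace_enum : uniq vspace_enum.
Proof. exact: enum_uniq. Qed.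

Lemma mem_vspace_enum x : (x \in vspace_enum) = (x \in W).
Proof. exact: (@mem_enum (finvect_type L)). Qed.

Lemma size_vspace_enum : size vspace_enum = N.
Proof.
rewrite -(card_vspace (W : {vspace finvect_type L})).
by rewrite (@eq_card _ _ [pred w : finvect_type L | (w : L) \in W]) // cardE.
Qed.

Lemma subspace_polyE : LW = \prod_(w <- vspace_enum) ('X - w%:P).
Proof.
by rewrite (big_enum _ _ [pred w : finvect_type L | (w : L) \in W] (fun w => 'X - (w : L)%:P)).
Qed.

Lemma size_subspace_poly : size LW = N.+1.
Proof. by rewrite subspace_polyE size_prod_XsubC size_vspace_enum. Qed.

Lemma horner_subspace_poly x : LW.[x] = \prod_(w <- vspace_enum) (x - w).
Proof. by rewrite subspace_polyE horner_prod; apply: eq_bigr => w _; rewrite hornerXsubC. Qed.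

Lemma root_subspace_poly x : x \in W -> LW.[x] = 0.
Proof.
move=> xW; rewrite horner_subspace_poly.
by rewrite (bigD1_seq x) ?mem_vspace_enum ?uniq_vspace_enum //= subrr mul0r.
Qed.

Lemma subspace_polyDr x w : w \in W -> LW.[x + w] = LW.[x].
Proof.
move=> wW; rewrite /subspace_poly !horner_prod (reindex_inj (addIr (w : finvect_type L))) /=.
apply: eq_big => [y|y _]; first by rewrite rpredDr.
by rewrite !hornerXsubC opprD addrACA subrr addr0.
Qed.

(* [LW(X + y) - LW(X) - LW(y)] has degree < N, as both subspace polynomials are monic of
   degree N, and vanishes on the N points of W. *)
Lemma subspace_polyD x y : LW.[x + y] = LW.[x] + LW.[y].
Proof.
pose P := LW \Po ('X + y%:P); pose Q := P - LW - (LW.[y])%:P.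
have sizeXy : size ('X + y%:P) = 2 by rewrite size_XaddC.
suff /(congr1 (horner^~ x)) : Q = 0.
  rewrite /Q !hornerE horner_comp !hornerE => /eqP.
  by rewrite subr_eq0 subr_eq => /eqP ->; rewrite addrC.
apply/eqP; apply: contraT => Qn0; have := max_poly_roots Qn0 (rs := vspace_enum).
rewrite uniq_vspace_enum size_vspace_enum.
have -> : all (root Q) vspace_enum.
  apply/allP => w; rewrite mem_vspace_enum => wW.
  rewrite /root /Q !hornerE horner_comp !hornerE (addrC w) subspace_polyDr //.
  by rewrite (@root_subspace_poly w) // subr0 subrr.
move=> /(_ isT isT); apply: contraTT => _; rewrite -leqNgt.
have sizeP : size P = N.+1 by rewrite size_comp_poly2 // size_subspace_poly.
have lcP : lead_coef P = lead_coef LW.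
  by rewrite lead_coef_comp ?sizeXy // lead_coefXaddC expr1n mulr1.
have size_PLW : (size (P - LW)%R <= N)%N.
  apply/leq_sizeP => j; rewrite leq_eqVlt => /predU1P[<-|ltNj]; rewrite coefB.
    by move: lcP; rewrite /lead_coef sizeP size_subspace_poly => ->; rewrite subrr.
  by rewrite !nth_default ?subrr ?sizeP ?size_subspace_poly.
apply: leq_trans (size_polyD _ _) _; rewrite geq_max size_PLW size_polyN size_polyC.
by rewrite (leq_trans (leq_b1 _)) // expn_gt0 ltnW // card_finNzRing_gt1.
Qed.

Lemma expf_card_pow (c : K) d : c ^+ (#|K| ^ d) = c.
Proof. by elim: d => [|d IHd]; rewrite ?expr1 // expnS exprM expf_card IHd. Qed.

(* Multiplication by [c != 0] permutes [W], so [LW(c x) = c ^ N LW(x) = c LW(x)]. *)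
Lemma subspace_polyZ (c : K) x : LW.[c *: x] = c *: LW.[x].
Proof.
have [->|cn0] := eqVneq c 0; first by rewrite !scale0r root_subspace_poly ?mem0v.
rewrite /subspace_poly !horner_prod.
rewrite (reindex_inj (scalerI cn0 : injective (fun w : finvect_type L => c *: w))) /=.
rewrite (eq_bigl (fun w : finvect_type L => (w : L) \in W)); last first.
  by move=> w; rewrite /= rpredZeq (negPf cn0).
rewrite (eq_bigr (fun w : finvect_type L => c%:A * ('X - (w : L)%:P).[x])); last first.
  by move=> w _; rewrite !hornerXsubC -scalerBr mulr_algl.
rewrite big_split /= prodr_const (card_vspace (W : {vspace finvect_type L})).
by rewrite exprZn expr1n expf_card_pow mulr_algl.
Qed.

Definition subspace_map x := LW.[x].

Fact subspace_map_is_linear : linear subspace_map.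
Proof. by move=> c x y; rewrite /subspace_map subspace_polyD subspace_polyZ. Qed.

HB.instance Definition _ :=
  GRing.isLinear.Build K L L *:%R subspace_map subspace_map_is_linear.

Definition subspace_lfun : 'End(L) := linfun subspace_map.

Lemma subspace_lfunE x : subspace_lfun x = LW.[x].
Proof. by rewrite lfunE. Qed.

Lemma dim_limg_subspace_lfun : (\dim (limg subspace_lfun) <= \dim {:L} - \dim W)%N.
Proof.
have /dimvS kerW : (W <= lker subspace_lfun)%VS.
  by apply/subvP => x xW; rewrite memv_ker subspace_lfunE root_subspace_poly.
by rewrite -(limg_ker_dim subspace_lfun fullv) capfv addnC -addnBA // leq_addr.
Qed.

End SubspacePoly.

Section CheckPoly.
Variables (K : finFieldType) (L : fieldExtType K) (W : {vspace L}).
Local Notation LW := (subspace_poly W).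

Definition subspace_poly_divX : {poly L} := \prod_(w <- vspace_enum W | w != 0) ('X - w%:P).
Local Notation M := subspace_poly_divX.

Lemma subspace_poly_mulX : LW = 'X * M.
Proof.
rewrite subspace_polyE (bigD1_seq 0) ?mem_vspace_enum ?mem0v ?uniq_vspace_enum //=.
by rewrite subr0.
Qed.

Lemma subspace_poly_divX0 : M.[0] != 0.
Proof.
rewrite horner_prod prodf_seq_neq0; apply/allP => w _.
by apply/implyP => wn0; rewrite hornerXsubC sub0r oppr_eq0.
Qed.

Lemma check_polyE u a : check_poly W u a = u%:P * (M \Po (u%:P * ('X - a%:P))).
Proof.
rewrite /check_poly subspace_poly_mulX comp_polyM comp_polyX.
by rewrite [u%:P * _]mulrC -mulrA mulKp // polyXsubC_eq0.
Qed.

Lemma horner_check_poly u a x : (check_poly W u a).[x] = u * M.[u * (x - a)].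
Proof. by rewrite check_polyE hornerM hornerC horner_comp hornerM hornerC hornerXsubC. Qed.

Lemma subspace_poly_divX_neq0 : M != 0.
Proof. by apply: contraNneq subspace_poly_divX0 => ->; rewrite horner0. Qed.

Lemma size_subspace_poly_divX : size M = (#|K| ^ \dim W)%N.
Proof.
have := size_subspace_poly W.
by rewrite subspace_poly_mulX mulrC size_mulX ?subspace_poly_divX_neq0 // => -[].
Qed.

Lemma size_check_poly u a : u != 0 -> size (check_poly W u a) = (#|K| ^ \dim W)%N.
Proof.
move=> un0; rewrite check_polyE size_Cmul // size_comp_poly2 ?size_subspace_poly_divX //.
by rewrite size_Cmul // size_XsubC.
Qed.

Lemma horner_check_poly_neq u a b :
  b != a -> (check_poly W u a).[b] = (b - a)^-1 * subspace_lfun W (u * (b - a)).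
Proof.
move=> ba; rewrite horner_check_poly subspace_lfunE subspace_poly_mulX hornerM hornerX.
by set m := M.[_]; rewrite mulrAC [RHS]mulrC mulfK // subr_eq0.
Qed.

Lemma check_poly_basis_at (u : seq L) a :
  basis_of fullv u -> basis_of fullv [seq (check_poly W ui a).[a] | ui <- u].
Proof.
have /eqP kerM0 : lker (amulr M.[0]) == 0%VS by rewrite lker0_amulr ?unitfE ?subspace_poly_divX0.
have -> : [seq (check_poly W ui a).[a] | ui <- u] = map (amulr M.[0]) u.
  by apply: eq_map => ui; rewrite horner_check_poly subrr mulr0 lfunE.
move=> /(limg_basis_of (f := amulr M.[0])); rewrite kerM0 capv0 => /(_ erefl).
by rewrite lker0_limgf ?kerM0.
Qed.

Lemma dim_span_check_poly (u : seq L) a b : b != a ->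
  (\dim <<[seq (check_poly W ui a).[b] | ui <- u]>> <= \dim {:L} - \dim W)%N.
Proof.
move=> ba; set c := b - a.
have -> : [seq (check_poly W ui a).[b] | ui <- u]
    = map (amull c^-1%R \o subspace_lfun W \o amulr c)%VF u.
  by apply: eq_map => ui; rewrite horner_check_poly_neq // !comp_lfunE !lfunE.
rewrite -limg_span !limg_comp; apply: leq_trans (dim_limg_leq _ _) _.
by apply: leq_trans (dim_limg_subspace_lfun W); rewrite dimvS ?limgS ?subvf.
Qed.

End CheckPoly.

Section ReedSolomonDual.
Variable F : fieldType.
Implicit Types (A : seq F) (h : {poly F}).

Definition node_poly A x : {poly F} := \prod_(y <- A | y != x) ('X - y%:P).

Definition rs_dual_weight A x : F := (node_poly A x).[x]^-1.

Lemma monic_node_poly A x : node_poly A x \is monic.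
Proof. by rewrite /node_poly -big_filter monic_prod_XsubC. Qed.

Lemma size_node_poly A x : uniq A -> x \in A -> size (node_poly A x) = size A.
Proof.
move=> uA xA; rewrite /node_poly -big_filter size_prod_XsubC -rem_filter //.
by rewrite size_rem // prednK // -has_predT; apply/hasP; exists x.
Qed.

Lemma horner_node_poly A x b : b \in A -> b != x -> (node_poly A x).[b] = 0.
Proof.
move=> bA bx; apply/rootP; rewrite /node_poly -big_filter root_prod_XsubC.
by rewrite mem_filter bx.
Qed.

Lemma rs_dual_weight_neq0 A x : rs_dual_weight A x != 0.
Proof.
rewrite invr_eq0 /node_poly horner_prod prodf_seq_neq0; apply/allP => y _.
by apply/implyP => yx; rewrite hornerXsubC subr_eq0 eq_sym.
Qed.

Lemma lagrange_interpolation A h : uniq A -> (size h <= size A)%N ->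
  h = \sum_(x <- A) (rs_dual_weight A x * h.[x]) *: node_poly A x.
Proof.
move=> uA sh; set Q := \sum_(x <- A) _; apply/eqP; rewrite eq_sym -subr_eq0.
apply: contraTT isT => QhN0; have := max_poly_roots QhN0 (rs := A).
have -> : all (root (Q - h)) A.
  apply/allP => b bA; rewrite /root hornerD hornerN horner_sum.
  rewrite (bigD1_seq b) //= big1_seq ?addr0 => [|x /andP[xb xA]]; last first.
    by rewrite hornerZ horner_node_poly ?mulr0 // eq_sym.
  have := rs_dual_weight_neq0 A b; rewrite hornerZ invr_eq0 => nb0.
  by rewrite /rs_dual_weight mulrAC mulVf ?mul1r ?subrr.
rewrite uA ltnNge => /(_ isT isT); apply: contraNN => _.
apply: leq_trans (size_polyD _ _) _; rewrite size_polyN geq_max sh andbT.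
rewrite /Q big_seq; apply: (big_ind (fun p : {poly F} => size p <= size A)%N).
- by rewrite size_poly0.
- by move=> p r sp sr; apply: leq_trans (size_polyD _ _) _; rewrite geq_max sp.
- by move=> x xA; rewrite (leq_trans (size_scale_leq _ _)) ?size_node_poly.
Qed.

(* Compare the coefficients of [X ^ (size A - 1)] in the Lagrange interpolation of [h]. *)
Lemma sum_rs_dual_weight A h : uniq A -> (size h < size A)%N ->
  \sum_(x <- A) rs_dual_weight A x * h.[x] = 0.
Proof.
move=> uA sh; have nA : (0 < size A)%N by apply: leq_ltn_trans sh.
have := congr1 (fun p : {poly F} => p`_(size A).-1) (lagrange_interpolation uA (ltnW sh)).
rewrite coef_sum nth_default => [coefE|]; last by rewrite -ltnS prednK.
rewrite [RHS]coefE !big_seq; apply: eq_bigr => x xA.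
by rewrite coefZ -(size_node_poly uA xA) -lead_coefE (monicP (monic_node_poly A x)) mulr1.
Qed.
End ReedSolomonDual.

Section FunctionalDualBasis.
Variables (K : fieldType) (L : fieldExtType K).

Lemma exists_functional_neq0 : exists (tau : 'Hom(L, K^o)) (x0 : L), tau x0 != 0.
Proof.
pose e := vbasis {:L}; pose i0 : 'I_(\dim {:L}) := Ordinal (adim_gt0 (aspacef L)).
have := coord_free i0 i0 (basis_free (vbasisP {:L})); rewrite eqxx => coord_i0.
by exists (linfun (coord e i0 : L -> K^o)), e`_i0; rewrite lfunE /= coord_i0 oner_eq0.
Qed.

Definition functional_frame (tau : 'Hom(L, K^o)) (C : seq L) (y : L) : L :=
  \sum_(c <- C) tau (c * y) *: c.

Fact functional_frame_is_linear tau C : linear (functional_frame tau C).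
Proof.
move=> k y z; rewrite /functional_frame scaler_sumr -big_split; apply: eq_bigr => c _ /=.
by rewrite mulrDr -scalerAr linearD linearZ /= scalerDl scalerA.
Qed.

HB.instance Definition _ tau C :=
  GRing.isLinear.Build K L L *:%R (functional_frame tau C) (functional_frame_is_linear tau C).

(* If [tau x0 != 0], then [y] is determined by the values [tau (c * y)] for [c] in a basis
   [C]: were they all zero, [tau (x * y) = 0] for all [x], in particular for [x = x0 / y]. *)
Lemma functional_dual_basis (tau : 'Hom(L, K^o)) x0 (C : seq L) :
  tau x0 != 0 -> basis_of fullv C ->
  exists e : L -> L, forall y, y = \sum_(c <- C) tau (c * y) *: e c.
Proof.
move=> taux0 /andP[/eqP spanC freeC]; pose Phi : 'End(L) := linfun (functional_frame tau C).
have kerPhi : lker Phi == 0%VS.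
  rewrite -subv0; apply/subvP => d; rewrite memv_ker lfunE memv0 /= => /eqP Phi0.
  apply: contraTT taux0 => dn0; apply/negPn/eqP.
  have /freeP freeCt : free (in_tuple C) := freeC.
  have tauC0 : forall i : 'I_(size C), tau (C`_i * d) = 0.
    by apply: freeCt; rewrite -[RHS]Phi0 /functional_frame (big_nth 0) big_mkord.
  have x0C : x0 / d \in <<in_tuple C>>%VS by rewrite spanC memvf.
  rewrite -[x0](divfK dn0) (coord_span x0C) mulr_suml linear_sum big1 // => i _.
  by rewrite -scalerAl linearZ /= tauC0 scaler0.
exists (Phi^-1)%VF => y; rewrite -{1}(lker0_lfunK kerPhi y) lfunE /= linear_sum.
by apply: eq_bigr => c _; rewrite linearZ.
Qed.

End FunctionalDualBasis.

Section NodeDownloads.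
Variables (K : fieldType) (L : fieldExtType K) (A : seq L) (a : L).
Hypotheses (uniqA : uniq A) (aA : a \in A).
Variables (tau : 'Hom(L, K^o)) (G : seq {poly L}) (e : L -> L).

Lemma functional_check_equation (h : {poly L}) : (size h < size A)%N ->
  tau (rs_dual_weight A a * h.[a])
    = - \sum_(b <- A | b != a) tau (rs_dual_weight A b * h.[b]).
Proof.
move=> sh; have := sum_rs_dual_weight uniqA sh; rewrite (bigD1_seq a) //= => /eqP.
by rewrite addr_eq0 => /eqP/(congr1 tau); rewrite linearN linear_sum.
Qed.

(* Expanding each [g(b)] on a basis [v_j] of the span of the [g(b)] turns the terms
   [tau (lambda_b g(b) f(b))] of the check equations into the downloads [tau (lambda_b v_j f(b))]. *)
Definition node_downloads (b : L) : seq ('Hom(L, K^o) * L) :=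
  let U := <<[seq g.[b] | g <- G]>>%VS in
  [seq ((tau \o amull (rs_dual_weight A b * (vbasis U)`_j))%VF,
        - \sum_(g <- G) coord (vbasis U) j g.[b] *: e g.[a])
  | j : 'I_(\dim U) <- enum 'I_(\dim U)].

Lemma size_node_downloads b : size (node_downloads b) = \dim <<[seq g.[b] | g <- G]>>.
Proof. by rewrite size_map -cardE card_ord. Qed.

Lemma node_downloadsE b y :
  \sum_(p <- node_downloads b) (p.1 y : K) *: p.2
    = - \sum_(g <- G) tau (rs_dual_weight A b * (g.[b] * y)) *: e g.[a].
Proof.
rewrite /node_downloads big_map big_enum /=; set U := <<_>>%VS.
under eq_bigr do rewrite comp_lfunE lfunE /= scalerN scaler_sumr.
rewrite sumrN exchange_big /=; congr (- _); rewrite !big_seq; apply: eq_bigr => g gG.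
have gU : g.[b] \in U by apply/memv_span/map_f.
rewrite [in RHS](coord_vbasis gU) mulr_suml mulr_sumr linear_sum scaler_suml.
apply: eq_bigr => j _; rewrite scalerA -scalerAl -scalerAr mulrA linearZ /=.
by rewrite mulrC.
Qed.

End NodeDownloads.

Section RepairSchemeOfChecks.
Variables (K : finFieldType) (L : fieldExtType K) (A : seq L) (k : nat) (a : L).
Hypotheses (uniqA : uniq A) (aA : a \in A).

Lemma repair_scheme_of_checks (G : seq {poly L}) :
  (forall g, g \in G -> size g <= size A - k)%N ->
  basis_of fullv [seq g.[a] | g <- G] ->
  exists S, is_linear_repair_scheme A k a S
            /\ forall b, size (S b) = \dim <<[seq g.[b] | g <- G]>>.
Proof.
move=> sizeG basisGa; have [tau [x0 taux0]] := exists_functional_neq0 L.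
have la_tau : (tau \o amull (rs_dual_weight A a))%VF ((rs_dual_weight A a)^-1 * x0) != 0.
  by rewrite comp_lfunE lfunE /= mulVKf ?rs_dual_weight_neq0.
have [e recon] := functional_dual_basis la_tau basisGa.
exists (node_downloads A a tau G e); split => [f sizef|b]; last exact: size_node_downloads.
have size_gf g : g \in G -> (size (g * f)%R < size A)%N.
  have nA : (0 < size A)%N by rewrite -has_predT; apply/hasP; exists a.
  move=> gG; have [->|gn0] := eqVneq g 0; first by rewrite mul0r size_poly0.
  apply: leq_ltn_trans (size_polyMleq _ _) _; move: (sizeG g gG) sizef.
  by rewrite -size_poly_eq0 in gn0; lia.
under eq_bigr do rewrite node_downloadsE.
rewrite sumrN exchange_big /= {1}(recon f.[a]) big_map -sumrN !big_seq.
apply: eq_bigr => g gG; rewrite -scaler_suml -scaleNr comp_lfunE lfunE /=.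
rewrite -hornerM functional_check_equation ?size_gf //.
by congr (- _ *: _); apply: eq_bigr => b _; rewrite hornerM.
Qed.

End RepairSchemeOfChecks.

Section Annihilator.
Variables (K : fieldType) (L : fieldExtType K) (tau : 'Hom(L, K^o)).

Definition annihilator (C : seq L) : {vspace L} := (\bigcap_(c <- C) lker (tau \o amulr c))%VS.

Lemma memv_annihilator C z : (z \in annihilator C) = all (fun c => tau (z * c) == 0) C.
Proof.
elim: C => [|c C IHC]; first by rewrite /annihilator big_nil memvf.
by rewrite /annihilator big_cons memv_cap -/(annihilator C) IHC memv_ker comp_lfunE lfunE.
Qed.

Lemma dim_annihilator C : (\dim {:L} - size C <= \dim (annihilator C))%N.
Proof.
elim: C => [|c C IHC]; first by rewrite subn0 /annihilator big_nil.
rewrite /annihilator big_cons -/(annihilator C); apply: leq_trans (dimv_cap_ge _ _).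
move: (dim_lker_functional (tau \o amulr c)) IHC (dimvS (subvf (annihilator C))) => /=.
(* [lia] does not identify these dimensions up to conversion, hence the generalization. *)
by move: (\dim (lker _)) (\dim (annihilator C)) (\dim fullv) => dk dA t; lia.
Qed.

End Annihilator.

Section RepairSchemeLowerBound.
Variables (K : finFieldType) (L : fieldExtType K) (A : seq L) (k : nat) (a : L).
Variable S : L -> seq ('Hom(L, K^o) * L).
Hypotheses (uniqA : uniq A) (aA : a \in A) (schemeS : is_linear_repair_scheme A k a S).
Variables (tau : 'Hom(L, K^o)) (x0 : L).
Hypothesis taux0 : tau x0 != 0.

Local Notation V b := (annihilator tau (unzip2 (S b))).
Local Notation A' := [seq b <- A | b != a].

Lemma repair_annihilator z (f : {poly L}) : (size f <= k)%N ->
  {in A', forall b, z \notin V b -> f.[b] = 0} -> tau (z * f.[a]) = 0.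
Proof.
move=> sizef f0; rewrite (schemeS sizef) -big_filter mulr_sumr linear_sum big_seq big1 // => b bA'.
rewrite mulr_sumr linear_sum big1_seq // => p pSb; rewrite -scalerAr linearZ /=.
have [zV|zNV] := boolP (z \in V b); last by rewrite f0 // linear0 scale0r.
by move: zV; rewrite memv_annihilator => /allP/(_ p.2 (map_f _ pSb))/eqP ->; rewrite scaler0.
Qed.

(* Otherwise the nodes of [A'] outside [V b] are fewer than [k]: a polynomial of degree
   [< k] vanishing there takes any value [c] at [a], forcing [tau (z * c) = 0] for all [c]. *)
Lemma count_annihilator_lt z : z != 0 -> (count (fun b => z \in V b) A' < size A - k)%N.
Proof.
move=> zn0; rewrite ltnNge; apply: contra taux0; set P := fun b => _ => count_ge.
pose T := [seq b <- A' | ~~ P b].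
have sizeT : (size T < k)%N.
  have := count_predC P A'; rewrite size_filter_predC1 // -(size_filter (predC P)) -/T.
  have : (0 < size A)%N by rewrite -has_predT; apply/hasP; exists a.
  by move: count_ge; set n := size A; lia. (* [set] unifies the two typings of [size A] *)
pose l := \prod_(y <- T) ('X - y%:P).
have la0 : l.[a] != 0.
  rewrite horner_prod prodf_seq_neq0; apply/allP => y.
  by rewrite !mem_filter => /and3P[_ ya _]; rewrite hornerXsubC subr_eq0 eq_sym.
have tau_z c : tau (z * c) = 0.
  have := @repair_annihilator z ((c / l.[a]) *: l); rewrite hornerZ divfK //; apply.
    by rewrite (leq_trans (size_scale_leq _ _)) // size_prod_XsubC.
  move=> b bA' zNV; have /rootP lb0 : root l b by rewrite root_prod_XsubC mem_filter zNV.
  by rewrite hornerZ lb0 mulr0.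
by rewrite -[x0](mulVKf zn0) tau_z.
Qed.

Lemma sum_card_annihilator :
  (\sum_(b <- A') #|K| ^ \dim (V b)
     <= (size A).-1 + (#|K| ^ \dim {:L}).-1 * (size A - k).-1)%N.
Proof.
have cardV b : (#|K| ^ \dim (V b) = \sum_(z : finvect_type L) (z \in V b))%N.
  rewrite -(card_vspace (V b : {vspace finvect_type L})) -sum1_card big_mkcond /=.
  by apply: eq_bigr => z _; case: (z \in V b).
rewrite (eq_bigr _ (fun b _ => cardV b)) exchange_big /= (bigD1 0) //=.
have countE z : (\sum_(b <- A') (z \in V b) = count (fun b => z \in V b) A')%N.
  by rewrite -sum1_count [RHS]big_mkcond; apply: eq_bigr => b _; case: (z \in V b).
rewrite countE (eq_count (a2 := predT)) => [|b]; last by rewrite mem0v.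
rewrite count_predT size_filter_predC1 // leq_add2l.
apply: (@leq_trans (\sum_(z : finvect_type L | z != 0%R) (size A - k).-1)%N).
  apply: leq_sum => z zn0; rewrite countE -ltnS (leq_trans (count_annihilator_lt zn0)) //.
  exact: leqSpred.
rewrite sum_nat_const cardC1 -(card_vspace (fullv : {vspace finvect_type L})).
by rewrite card_vspacef.
Qed.

End RepairSchemeLowerBound.

Lemma repair_bandwidth_lower_bound (K : finFieldType) (L : fieldExtType K) (A : seq L)
    (k : nat) (a : L) (S : L -> seq ('Hom(L, K^o) * L)) (s : nat) :
  uniq A -> a \in A -> is_linear_repair_scheme A k a S ->
  size A = (#|K| ^ \dim {:L})%N -> (size A - k = #|K| ^ s)%N ->
  ((size A).-1 * (\dim {:L} - s) <= repair_bandwidth A a S)%N.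
Proof.
move=> uniqA aA schemeS sizeA r_eq; have [tau [x0 taux0]] := exists_functional_neq0 L.
have q_gt1 : (1 < #|K|)%N := card_finNzRing_gt1 K.
set A' := [seq b <- A | b != a]; have sizeA' : size A' = (size A).-1 by exact: size_filter_predC1.
have sum_exp : (\sum_(b <- A') #|K| ^ (\dim {:L} - size (S b)) <= size A' * #|K| ^ s)%N.
  apply: (@leq_trans (\sum_(b <- A') #|K| ^ \dim (annihilator tau (unzip2 (S b))))).
    apply: leq_sum => b _; rewrite leq_pexp2l ?(ltnW q_gt1) //.
    by apply: leq_trans (dim_annihilator _ _); rewrite size_map.
  apply: leq_trans (sum_card_annihilator uniqA aA schemeS taux0) _.
  rewrite r_eq -sizeA sizeA' -[X in (X + _ <= _)%N]muln1 -mulnDr add1n prednK //.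
  by rewrite expn_gt0 ltnW.
rewrite /repair_bandwidth -big_filter -/A' -sizeA'.
have := sum_leq_of_sum_expn_leq q_gt1 sum_exp.
have : (\sum_(b <- A') \dim {:L} <= \sum_(b <- A') (size (S b) + (\dim {:L} - size (S b))))%N.
  by apply: leq_sum => b _; rewrite -leq_subLR.
rewrite big_split /= big_const_seq iter_addn_0 count_predT mulnBr.
by move: (\sum_(b <- A') _)%N (\sum_(b <- A') _)%N => bw dsum; nia.
Qed.

Unset Implicit Arguments.

Theorem theorem4 (K : finFieldType) (L : fieldExtType K) (q t s n k : nat)
    (A : seq L) (u : t.-tuple L) (W : {vspace L}) (a : L) :
  #|K| = q -> \dim {:L} = t -> (1 <= t)%N ->
  uniq A -> size A = n -> (n <= q ^ t)%N ->
  (s < t)%N -> (q ^ s <= n - k)%N ->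
  basis_of fullv u -> \dim W = s -> a \in A ->
  let g := fun ui : L => check_poly W ui a in
  [/\ (* the g_i are checks: deg g_i = q^s - 1 <= r - 1 *)
      (forall ui, ui \in u -> size (g ui) = (q ^ s)%N /\ (size (g ui) <= n - k)%N),
      (* rank_{F_q} {g_i(a)} = t *)
      \dim <<[seq (g ui).[a] | ui <- u]>>%VS = t,
      (* the induced linear repair scheme: node b sends
         b_b = rank_{F_q}{g_i(b)} sub-symbols, total <= (n-1)(t-s) *)
      exists S, [/\ is_linear_repair_scheme A k a S,
        (forall b, b \in A -> b != a ->
           size (S b) = \dim <<[seq (g ui).[b] | ui <- u]>>%VS),
        (\sum_(b <- A | b != a) \dim <<[seq (g ui).[b] | ui <- u]>>%VS
           <= (n - 1) * (t - s))%N &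
        (repair_bandwidth A a S <= (n - 1) * (t - s))%N] &
      (* optimality when n = q^t and r = q^s *)
      n = (q ^ t)%N -> (n - k = q ^ s)%N ->
      forall S, is_linear_repair_scheme A k a S ->
        ((n - 1) * (t - s) <= repair_bandwidth A a S)%N].
Proof.
move=> q_eq t_eq _ uniqA sizeA _ _ r_ge basis_u dimW aA g.
have size_g ui : ui \in u -> size (g ui) = (q ^ s)%N.
  by move=> uiu; rewrite size_check_poly ?q_eq ?dimW // (free_not0 (basis_free basis_u)).
have basis_a := check_poly_basis_at W a basis_u.
have sum_dim : (\sum_(b <- A | b != a) \dim <<[seq (g ui).[b] | ui <- u]>>%VS
                  <= (n - 1) * (t - s))%N.
  apply: (@leq_trans (\sum_(b <- A | b != a) (t - s))).
    by apply: leq_sum => b ba; move: (dim_span_check_poly W u ba); rewrite t_eq dimW.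
  by rewrite big_const_seq iter_addn_0 -size_filter size_filter_predC1 // sizeA mulnC subn1.
split.
- by move=> ui /size_g ->; split.
- by case/andP: basis_a => /eqP -> _; rewrite t_eq.
- have mapG b : [seq p.[b] | p <- map g u] = [seq (g ui).[b] | ui <- u] by rewrite -map_comp.
  have [||S [schemeS sizeS]] := repair_scheme_of_checks (k := k) uniqA aA (G := map g u).
  + by move=> _ /mapP[ui uiu ->]; rewrite size_g // sizeA.
  + by rewrite mapG.
  exists S; split => // [b _ _|]; first by rewrite sizeS mapG.
  by rewrite /repair_bandwidth (eq_bigr _ (fun b _ => sizeS b)); under eq_bigr do rewrite mapG.
- move=> n_eq r_eq S schemeS; rewrite -t_eq subn1 -sizeA.
  by apply: (repair_bandwidth_lower_bound uniqA aA schemeS); rewrite ?sizeA ?t_eq ?q_eq.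
Qed.
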